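(* Let $(g(x))_{x\ge0}$ be a semigroup acting on a real finite-dimensional vector space $V$, with SRPD $V=\bigoplus_{i=1}^nV_i$. Let $I$ be the set of indices $i$ such that $V_i$ is of first type and its eigenvalue satisfies $\lambda(x)=0$ for all $x>0$. Then for every $x>0$, $\ker g(x)=\bigoplus_{i\in I}V_i$.
   Context: A semigroup is a map $g:[0,\infty)\to L(V)$ with $g(0)=\mathrm{id}$ and $g(x+y)=g(x)g(y)$ for all $x,y\ge0$. A simultaneous real primary decomposition (SRPD) is a decomposition $V=\bigoplus_{i=1}^nV_i$ into nonzero subspaces, each $g(x)$-invariant for all $x\ge0$, such that each $V_i$ is either of first type: for every $x\ge0$, $g(x)|_{V_i}$ has exactly one (complex) eigenvalue $\lambda(x)$, which is real and $\ge0$; or of second type: for every $x\ge 0$ the eigenvalues of $g(x)|_{V_i}$ lie in $\{\lambda(x),\overline{\lambda(x)}\}$ for some $\lambda(x)\in\mathbb C$, with $\lambda(x)\notin\mathbb R$ for some $x$. *)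

(* V = 'rV[R]_d (real row vectors, R : realType),
   linear maps = square matrices acting on the right: v |-> v *m A.
   Subspaces = matrices via their row spaces (mxalgebra, %MS). *)
From HB Require Import structures.
From mathcomp Require Import all_boot all_order all_algebra.
From mathcomp Require Import complex.
From mathcomp Require Import reals.
Set Implicit Arguments. Unset Strict Implicit. Unset Printing Implicit Defensive.
Import Order.TTheory GRing.Theory Num.Theory.
Local Open Scope ring_scope.

(* A semigroup g : [0,oo) -> L(V): only the values at x >= 0 matter. *)
Definition is_semigroup (R : realType) (d : nat) (g : R -> 'M[R]_d) : Prop :=
  g 0 = 1%:M /\
  forall x y : R, 0 <= x -> 0 <= y -> g (x + y) = g x *m g y.

(* Matrix of the restriction of A to an A-invariant subspace W, written in
   the basis row_base W of W. *)
Definition restr (R : fieldType) (d : nat) (W : 'M[R]_d) (A : 'M[R]_d)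
  : 'M[R]_(\rank W) :=
  row_base W *m A *m pinvmx (row_base W).

(* z is a (complex) eigenvalue of the real operator A restricted to W,
   i.e. an eigenvalue of the complexification of that restriction. *)
Definition ceig (R : rcfType) (d : nat) (W A : 'M[R]_d) (z : R[i]) : Prop :=
  eigenvalue (map_mx (real_complex R) (restr W A)) z.

Definition first_type (R : realType) (d : nat) (g : R -> 'M[R]_d)
  (W : 'M[R]_d) : Prop :=
  forall x : R, 0 <= x ->
    exists lam : R, 0 <= lam /\
      forall z : R[i], ceig W (g x) z <-> z = real_complex R lam.

Definition second_type (R : realType) (d : nat) (g : R -> 'M[R]_d)
  (W : 'M[R]_d) : Prop :=
  exists lam : R -> R[i],
    (forall x : R, 0 <= x -> forall z : R[i], ceig W (g x) z ->
        z = lam x \/ z = conjc (lam x)) /\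
    (exists x : R, 0 <= x /\ forall r : R, lam x <> real_complex R r).

Definition SRPD (R : realType) (d n : nat) (g : R -> 'M[R]_d)
  (Vs : 'I_n -> 'M[R]_d) : Prop :=
  mxdirect (\sum_(i < n) Vs i) /\
  (\sum_(i < n) Vs i == 1%:M)%MS /\
  (forall i, Vs i != 0) /\
  (forall i x, 0 <= x -> stablemx (Vs i) (g x)) /\
  (forall i, first_type g (Vs i) \/ second_type g (Vs i)).

Definition in_I (R : realType) (d : nat) (g : R -> 'M[R]_d)
  (W : 'M[R]_d) : Prop :=
  first_type g W /\
  forall x : R, 0 < x -> forall z : R[i], ceig W (g x) z <-> z = 0.

(* Write M_i(y) for the matrix of g(y) restricted to the block V_i; then M_i
   is again a semigroup.  The proof rests on one observation: if M_i(x) is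
   nilpotent for a single x > 0, then M_i(y) is nilpotent for every y > 0,
   because y is dominated by a multiple of x and M_i(ky) = M_i(y)^k.
   - If i is in I, every complex eigenvalue of M_i(y) vanishes (y > 0), so
     M_i(y) is nilpotent by Cayley-Hamilton and M_i(x) = M_i(x/r)^r = 0:
     g(x) kills V_i.
   - If i is not in I and M_i(x) were singular, 0 would be an eigenvalue of
     M_i(x); the type conditions force it to be the only one, so M_i is
     nilpotent at every positive time.  For a block of first type this puts
     i in I; for a block of second type it makes lambda real at every time
     (lambda(0) = 1 since M_i(0) = 1): both are contradictions. *)
From HB Require Import structures.
From mathcomp Require Import all_boot all_order all_algebra.
From mathcomp Require Import complex reals ring.
Import Order.TTheory GRing.Theory Num.Theory.
Local Open Scope ring_scope.
Set Implicit Arguments. Unset Strict Implicit.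

(* A matrix over an algebraically closed field whose only eigenvalue is 0 is
   nilpotent: its characteristic polynomial is 'X^r (Cayley-Hamilton). *)
Lemma eigenvalues0_nilpotent (F : closedFieldType) r (A : 'M[F]_r) :
  (forall z, eigenvalue A z -> z = 0) -> A ^+ r = 0.
Proof.
case: r A => [A _|r A eig0]; first by rewrite [LHS]flatmx0.
have [s char_s] := closed_field_poly_normal (char_poly A).
rewrite (monicP (char_poly_monic A)) scale1r in char_s.
have roots0 z : z \in s -> z = 0.
  by move=> zs; apply: eig0; rewrite eigenvalue_root_char char_s root_prod_XsubC.
have charX : char_poly A = 'X ^+ size s.
  rewrite char_s (eq_big_seq (fun=> 'X)) => [|z /roots0 ->]; last by rewrite subr0.
  by rewrite big_const_seq count_predT iter_mulr mulr1.
have := size_char_poly A; rewrite charX size_polyXn => -[size_s].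
by have := Cayley_Hamilton A; rewrite charX rmorphXn /= horner_mx_X size_s.
Qed.

Section RealSpectrum.
Variable R : rcfType.
Local Notation rc := (real_complex R).

Definition zero_spectrum r (A : 'M[R]_r) : Prop :=
  forall z : R[i], eigenvalue (map_mx rc A) z -> z = 0.

Lemma zero_spectrum_nilpotent r (A : 'M[R]_r) : zero_spectrum A -> A ^+ r = 0.
Proof.
move=> /eigenvalues0_nilpotent; rewrite -rmorphXn => /eqP.
by rewrite map_mx_eq0 => /eqP.
Qed.

Lemma nilpotent_zero_spectrum r (A : 'M[R]_r) k : A ^+ k = 0 -> zero_spectrum A.
Proof.
move=> Ak0 z /eigenvalueP [v vA v0].
have powA j : v *m map_mx rc A ^+ j = z ^+ j *: v.
  elim: j => [|j IH]; first by rewrite !expr0 mulmx1 scale1r.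
  by rewrite exprSr -mulmxE mulmxA IH -scalemxAl vA scalerA -exprSr.
have := powA k; rewrite -rmorphXn Ak0 raddf0 mulmx0 => /esym /eqP.
by rewrite scaler_eq0 (negPf v0) orbF expf_eq0 => /andP [_ /eqP].
Qed.

Lemma singular_eigenvalue0 r (A : 'M[R]_r) :
  A \notin unitmx -> eigenvalue (map_mx rc A) 0.
Proof.
move=> nonunitA; rewrite /eigenvalue /eigenspace raddf0 subr0.
by rewrite kermx_eq0 row_free_unit map_unitmx.
Qed.

Lemma nilpotent_eigenvalue0 r (A : 'M[R]_r) k :
  (0 < r)%N -> A ^+ k = 0 -> eigenvalue (map_mx rc A) 0.
Proof.
case: r A => // r A _ Ak0; apply: singular_eigenvalue0; apply: contraT.
rewrite negbK => /(unitrX k); rewrite Ak0.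
by rewrite unitmxE det0 unitr0.
Qed.

Lemma identity_eigenvalue1 (F : fieldType) r : (0 < r)%N -> eigenvalue (1%:M : 'M[F]_r) 1.
Proof.
case: r => // r _; rewrite /eigenvalue /eigenspace subrr kermx_eq0 row_free_unit.
by rewrite unitmxE det0 unitr0.
Qed.

Lemma conj_pair_real (l : R[i]) (a : R) : rc a = l \/ rc a = conjc l -> l = rc a.
Proof. by case=> [<- // | rc_conj]; rewrite -[l]conjcK -rc_conj conjc_real. Qed.

End RealSpectrum.

Section MatrixSemigroup.
Variables (R : realType) (r : nat) (M : R -> 'M[R]_r).
Hypothesis semigroupM : is_semigroup M.

Lemma semigroup_pow k y : 0 <= y -> M (k%:R * y) = M y ^+ k.
Proof.
case: semigroupM => M0 MD y0; elim: k => [|k IH]; first by rewrite mul0r expr0 M0.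
by rewrite -nat1r mulrDl mul1r MD ?mulr_ge0 // IH exprS mulmxE.
Qed.

(* Nilpotency at one positive time spreads to all positive times: pick
   m with x < m y, then M (k m y) = M (k x) M (k (m y - x)) = 0. *)
Lemma semigroup_nilpotent_spread x y k :
  0 < x -> 0 < y -> M x ^+ k = 0 -> exists k', M y ^+ k' = 0.
Proof.
move=> x0 y0 Mxk; case: semigroupM => _ MD.
have := archi_boundP (divr_ge0 (ltW x0) (ltW y0)).
set m := Num.bound (x / y); rewrite ltr_pdivrMr // => x_lt_my.
exists (k * m)%N; rewrite -semigroup_pow ?(ltW y0) //.
have -> : (k * m)%N%:R * y = k%:R * x + k%:R * (m%:R * y - x).
  by rewrite natrM; ring.
rewrite MD ?mulr_ge0 ?subr_ge0 ?(ltW x0) ?(ltW x_lt_my) //.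
by rewrite semigroup_pow ?(ltW x0) // Mxk mul0mx.
Qed.

Lemma semigroup_vanishes :
  (forall y, 0 < y -> zero_spectrum (M y)) -> forall x, 0 < x -> M x = 0.
Proof.
move=> spec0 x x0; have [r0|r_gt0] := posnP r.
  by apply/matrixP => i; have := ltn_ord i; rewrite {2}r0.
have r_neq0 : r%:R != 0 :> R by rewrite pnatr_eq0 -lt0n.
have x'0 : 0 < x / r%:R by rewrite divr_gt0 ?ltr0n.
rewrite -[x](divfK r_neq0) mulrC semigroup_pow ?(ltW x'0) //.
exact: zero_spectrum_nilpotent (spec0 _ x'0).
Qed.

Lemma semigroup_zero_spectrum_spread x :
  (0 < r)%N -> 0 < x -> zero_spectrum (M x) ->
  forall y, 0 < y -> forall z, eigenvalue (map_mx (real_complex R) (M y)) z <-> z = 0.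
Proof.
move=> r0 x0 /zero_spectrum_nilpotent Mx0 y y0 z.
have [k Myk] := semigroup_nilpotent_spread x0 y0 Mx0.
split; first exact: nilpotent_zero_spectrum Myk z.
by move=> ->; apply: nilpotent_eigenvalue0 Myk.
Qed.

End MatrixSemigroup.

Section Restriction.
Variables (F : fieldType) (d : nat) (W : 'M[F]_d).
Local Notation B := (row_base W).

Lemma restrP A : stablemx W A -> restr W A *m B = B *m A.
Proof. by move=> sA; apply: mulmxKpV; rewrite stablemx_row_base. Qed.

Lemma restrM A1 A2 : stablemx W A1 -> stablemx W A2 ->
  restr W (A1 *m A2) = restr W A1 *m restr W A2.
Proof.
move=> s1 s2; apply: (row_free_inj (row_base_free W)) => /=.
by rewrite restrP ?stablemxM // -mulmxA (restrP s2) [RHS]mulmxA (restrP s1) mulmxA.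
Qed.

Lemma restr1 : restr W 1%:M = 1%:M.
Proof.
apply: (row_free_inj (row_base_free W)) => /=.
by rewrite restrP ?mulmx1 ?mul1mx // submx_refl.
Qed.

Lemma restr0_kermx A : stablemx W A -> restr W A = 0 -> (W <= kermx A)%MS.
Proof. by move=> sA A0; rewrite -(eq_row_base W) sub_kermx -restrP // A0 mul0mx. Qed.

Lemma restr_unit_injective A : stablemx W A -> restr W A \in unitmx ->
  forall v : 'rV_d, (v <= W)%MS -> v *m A = 0 -> v = 0.
Proof.
move=> sA unitA v vW vA0; rewrite -(eq_row_base W) in vW.
rewrite -(mulmxKpV vW) in vA0 *; set u := v *m pinvmx B in vA0 *.
have uA0 : u *m restr W A = 0.
  by apply: (row_free_inj (row_base_free W)); rewrite -mulmxA restrP // mulmxA vA0 mul0mx.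
have -> : u = 0 by rewrite -[u]mulmx1 -(mulmxV unitA) mulmxA uA0 mul0mx.
by rewrite mul0mx.
Qed.

End Restriction.

Section InvariantBlock.
Variables (R : realType) (d : nat) (g : R -> 'M[R]_d) (W : 'M[R]_d).
Hypothesis semigroup_g : is_semigroup g.
Hypothesis stable_W : forall x, 0 <= x -> stablemx W (g x).
Local Notation M := (fun y => restr W (g y)).

Lemma restr_semigroup : is_semigroup M.
Proof.
case: semigroup_g => g0 gD; split; first by rewrite g0 restr1.
by move=> x y x0 y0; rewrite gD // restrM // stable_W.
Qed.

Lemma in_I_kermx x : in_I g W -> 0 < x -> (W <= kermx (g x))%MS.
Proof.
move=> [_ spec0] x0; apply: restr0_kermx; first exact: stable_W (ltW x0).
by apply: (semigroup_vanishes restr_semigroup) => // y y0 z /(spec0 y y0).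
Qed.

Hypothesis W_neq0 : W != 0.

Lemma rank_block_gt0 : (0 < \rank W)%N.
Proof. by rewrite lt0n mxrank_eq0. Qed.

(* A block of first type outside I is invertible at every positive time:
   otherwise its unique eigenvalue is 0 and the block would belong to I. *)
Lemma first_type_unit x : first_type g W -> ~ in_I g W -> 0 < x ->
  restr W (g x) \in unitmx.
Proof.
move=> typeW notI x0; apply: contraT => /singular_eigenvalue0 eig0.
have [lam [_ eig_lam]] := typeW x (ltW x0).
have spec0 : zero_spectrum (M x).
  by move=> z /(eig_lam z).1 ->; rewrite -((eig_lam 0).1 eig0).
case: notI; split; first exact: typeW.
exact: (semigroup_zero_spectrum_spread restr_semigroup rank_block_gt0 x0 spec0).
Qed.

(* A block of second type is invertible at every positive time: otherwise
   lambda vanishes at x, hence the block is nilpotent at all positive times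
   and lambda is real at every time, contradicting the second type. *)
Lemma second_type_unit x : second_type g W -> 0 < x -> restr W (g x) \in unitmx.
Proof.
move=> [lam [eig_lam [x1 [x10 nonreal]]]] x0.
apply: contraT => /singular_eigenvalue0 eig0.
have lam_x : lam x = real_complex R 0.
  by apply: conj_pair_real; rewrite rmorph0; apply: eig_lam x (ltW x0) 0 eig0.
rewrite rmorph0 in lam_x.
have spec0 : zero_spectrum (M x).
  by move=> z /(eig_lam x (ltW x0)) []; rewrite lam_x ?conjc0.
have spread := semigroup_zero_spectrum_spread restr_semigroup rank_block_gt0 x0 spec0.
have [x1_0|x1_neq0] := eqVneq x1 0.
- have eig1 : eigenvalue (map_mx (real_complex R) (M 0)) 1.
    case: semigroup_g => g0 _; rewrite g0 restr1 map_mx1.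
    exact: identity_eigenvalue1 rank_block_gt0.
  rewrite x1_0 in nonreal; case: (nonreal 1); apply: conj_pair_real; rewrite rmorph1.
  exact: eig_lam 0 (lexx 0) 1 eig1.
- have x1_gt0 : 0 < x1 by rewrite lt_def x1_neq0 x10.
  case: (nonreal 0); apply: conj_pair_real; rewrite rmorph0.
  exact: eig_lam x1 (ltW x1_gt0) 0 ((spread x1 x1_gt0 0).2 erefl).
Qed.

End InvariantBlock.

Section DirectSum.
Variables (F : fieldType) (d : nat) (I : finType) (Vs : I -> 'M[F]_d).
Hypothesis directV : mxdirect (\sum_i Vs i).

Lemma direct_sum_components0 (w : I -> 'rV[F]_d) :
  (forall i, (w i <= Vs i)%MS) -> \sum_i w i = 0 -> forall i, w i = 0.
Proof.
move=> wV sum0 i; have /mxdirect_sumsP/(_ i isT) capV0 := directV.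
have w_i : w i = - \sum_(j | j != i) w j.
  by apply/eqP; rewrite -addr_eq0; move: sum0; rewrite (bigD1 i) // => ->.
apply/eqP; rewrite -submx0 -capV0 sub_capmx wV /= w_i eqmx_opp.
by apply: summx_sub => j ji; apply: (sumsmx_sup j).
Qed.

Lemma mxdirect_subfamily (P : pred I) : mxdirect (\sum_(i | P i) Vs i).
Proof.
move/mxdirect_sumsP: directV => capV0; apply/mxdirect_sumsP => i Pi.
apply/eqP; rewrite -submx0 -[X in (_ <= X)%MS](capV0 i isT) capmxS //.
by apply/sumsmx_subP => j /andP [_ ji]; apply: (sumsmx_sup j).
Qed.

Hypothesis fullV : (\sum_i Vs i == 1%:M)%MS.

Lemma kermx_direct_sum (A : 'M[F]_d) (P : pred I) :
  (forall i, stablemx (Vs i) A) ->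
  (forall i, P i -> (Vs i <= kermx A)%MS) ->
  (forall i, ~~ P i -> forall v : 'rV_d, (v <= Vs i)%MS -> v *m A = 0 -> v = 0) ->
  (kermx A == \sum_(i | P i) Vs i)%MS.
Proof.
move=> stableA killP injP; apply/andP; split; last exact/sumsmx_subP.
apply/row_subP => k; set v := row k (kermx A).
have vA0 : v *m A = 0 by apply/sub_kermxP; rewrite row_sub.
have /sub_sumsmxP [u v_sum] : (v <= \sum_i Vs i)%MS.
  by case/andP: fullV => _; apply: submx_trans (submx1 v).
have components0 : forall i, u i *m Vs i *m A = 0.
  apply: direct_sum_components0 => [i|].
    exact: submx_trans (submxMr A (submxMl (u i) (Vs i))) (stableA i).
  by rewrite -mulmx_suml -v_sum vA0.
rewrite v_sum (bigID P) /= [X in _ + X]big1 ?addr0 => [|i notPi].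
  by apply: summx_sub => i Pi; apply: (sumsmx_sup i Pi (submxMl (u i) (Vs i))).
exact: injP notPi _ (submxMl (u i) (Vs i)) (components0 i).
Qed.

End DirectSum.

Unset Implicit Arguments.
Theorem mainTheorem5 (R : realType) (d n : nat) (g : R -> 'M[R]_d)
  (Vs : 'I_n -> 'M[R]_d) (I : pred 'I_n) :
  is_semigroup g -> SRPD g Vs ->
  (forall i, I i <-> in_I g (Vs i)) ->
  forall x : R, 0 < x ->
    (kermx (g x) == \sum_(i | I i) Vs i)%MS /\ mxdirect (\sum_(i | I i) Vs i).
Proof.
move=> semigroup_g [directV [fullV [nonzeroV [stableV typesV]]]] I_spec x x0.
split; last exact: mxdirect_subfamily.
have stable_x i : stablemx (Vs i) (g x) := stableV i x (ltW x0).
apply: kermx_direct_sum => // [i /I_spec I_i|i notI_i].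
  exact: (in_I_kermx semigroup_g (stableV i) I_i x0).
apply: restr_unit_injective (stable_x i) _.
case: (typesV i) => [first_i|second_i].
  apply: (first_type_unit semigroup_g (stableV i) (nonzeroV i) first_i _ x0).
  by move=> /I_spec I_i; rewrite I_i in notI_i.
exact: (second_type_unit semigroup_g (stableV i) (nonzeroV i) second_i x0).
Qed.
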